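(* Let $\beta\in\mathbb{F}_{p^m}\setminus\{0\}$ and $\mathcal{R}_{\alpha,\beta}=R[x]/\langle x^{4p^s}-(\alpha+\beta u)\rangle$. Then: (a) $\mathcal{R}_{\alpha,\beta}$ has exactly two maximal ideals, namely $\langle x^2+\gamma x+\frac{\gamma^2}{2}\rangle$ and $\langle x^2-\gamma x+\frac{\gamma^2}{2}\rangle$; (b) the set of nilpotent elements of $\mathcal{R}_{\alpha,\beta}$ is the ideal $\langle x^4-\alpha_0\rangle$; (c) the set of non-units of $\mathcal{R}_{\alpha,\beta}$ is $\langle x^2+\gamma x+\frac{\gamma^2}{2}\rangle\cup\langle x^2-\gamma x+\frac{\gamma^2}{2}\rangle$.
   Context: Let $p$ be an odd prime and $m,s$ positive integers with $p^m\equiv 3\pmod 4$; $\mathbb{F}_{p^m}$ is the field with $p^m$ elements and $R=\mathbb{F}_{p^m}[u]/\langle u^2\rangle$. Fix $\alpha\in\mathbb{F}_{p^m}\setminus\{0\}$ that is not a square in $\mathbb{F}_{p^m}$, let $\alpha_0\in\mathbb{F}_{p^m}$ satisfy $\alpha_0^{p^s}=\alpha$, and let $\gamma\in\mathbb{F}_{p^m}$ satisfy $\gamma^4+4\alpha_0=0$. *)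

From HB Require Import structures.
From mathcomp Require Import all_boot all_order all_algebra all_field.
Set Implicit Arguments. Unset Strict Implicit. Unset Printing Implicit Defensive.
Import GRing.Theory.
Local Open Scope ring_scope.

Section IdealNotions.
Variable T : comNzRingType.

Definition is_ideal (I : T -> Prop) : Prop :=
  [/\ I 0, (forall a b, I a -> I b -> I (a + b)) & (forall r a, I a -> I (r * a))].

Definition pideal (a : T) : T -> Prop := fun z => exists r : T, z = r * a.

Definition maximal_ideal (M : T -> Prop) : Prop :=
  [/\ is_ideal M, (exists z, ~ M z) &
      (forall J : T -> Prop, is_ideal J -> (forall z, M z -> J z) ->
          (forall z, J z) \/ (forall z, J z <-> M z))].

Definition nilpotent_elt (z : T) : Prop := exists n : nat, z ^+ n = 0.

Definition unit_elt (z : T) : Prop := exists w : T, z * w = 1.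

End IdealNotions.

(* R = F[u]/<u^2>, realised as the quotient of {poly F} by 'X^2 (u := class of 'X) *)
Definition Rdual (F : finFieldType) := {poly %/ ('X^2 : {poly F})}.

Definition Rc (F : finFieldType) (c : F) : Rdual F := qpolyC ('X^2 : {poly F}) c.

Definition Ru (F : finFieldType) : Rdual F := in_qpoly ('X^2 : {poly F}) 'X.

Definition modpoly (F : finFieldType) (p s : nat) (alpha beta : F) : {poly Rdual F} :=
  'X^(4 * p ^ s) - (Rc alpha + Rc beta * Ru F)%:P.

Definition Rab (F : finFieldType) (p s : nat) (alpha beta : F) :=
  {poly %/ modpoly p s alpha beta}.

Definition liftF (F : finFieldType) (p s : nat) (alpha beta : F) (q : {poly F})
  : Rab p s alpha beta :=
  in_qpoly (modpoly p s alpha beta) (map_poly (@Rc F) q).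

From HB Require Import structures.
From mathcomp Require Import all_boot all_order all_algebra all_field.
From Stdlib Require Import Classical.
From mathcomp Require Import zify ring.
Import GRing.Theory.
Local Open Scope ring_scope.

Set Implicit Arguments. Unset Strict Implicit.

(* In R_{alpha,beta} the class of x^(4p^s) - alpha equals beta u, so it squares
   to 0; in characteristic p it is the p^s-th power of x^4 - alpha0 = q1 q2, hence
   q1 q2 is nilpotent.  Killing u maps R_{alpha,beta} onto F[x]/<x^(4p^s) - alpha>,
   and since u lies in <q_i>, the quotient R_{alpha,beta}/<q_i> is F[x]/<q_i>, a
   field: q_i has degree 2 and a root of it would be a square root of -1, which
   does not exist when p^m = 3 mod 4.  A commutative ring with two elements
   Q1 not in <Q2>, whose product is nilpotent and whose quotients are fields, has
   exactly the maximal ideals <Q1> and <Q2>; its nilradical is <Q1 Q2> and its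
   non-units are <Q1> U <Q2>. *)

Section IdealTheory.
Variable T : comNzRingType.

Definition field_quotient (Q : T) : Prop :=
  ~ pideal Q 1 /\ forall z, pideal Q z \/ exists w r, z * w = 1 + r * Q.

Definition two_maximal_pideals (Q1 Q2 : T) : Prop :=
  [/\ (~ (forall z, pideal Q1 z <-> pideal Q2 z)) /\
      (forall M : T -> Prop,
         maximal_ideal M <-> ((forall z, M z <-> pideal Q1 z) \/ (forall z, M z <-> pideal Q2 z))),
      (forall z, nilpotent_elt z <-> pideal (Q1 * Q2) z)
    & (forall z, ~ unit_elt z <-> (pideal Q1 z \/ pideal Q2 z))].

Lemma pideal_is_ideal (a : T) : is_ideal (pideal a).
Proof.
split; first by exists 0; rewrite mul0r.
- by move=> x y [r ->] [t ->]; exists (r + t); rewrite mulrDl.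
- by move=> r x [t ->]; exists (r * t); rewrite mulrA.
Qed.

Lemma unit_elt_1D_nilpotent (a : T) : nilpotent_elt a -> unit_elt (1 + a).
Proof.
move=> [k ak0]; exists (\sum_(i < k) (- a) ^+ i).
have := subrX1 (- a) k; rewrite exprNn ak0 mulr0 sub0r => geom.
by rewrite -[LHS]opprK -mulNr opprD addrC -geom opprK.
Qed.

Lemma pideal_nonunit (Q z : T) : ~ pideal Q 1 -> pideal Q z -> ~ unit_elt z.
Proof. by move=> Q1 [r ->] [w zw]; apply: Q1; exists (w * r); rewrite -zw; ring. Qed.

Lemma field_quotient_nilpotent (Q z : T) :
  field_quotient Q -> nilpotent_elt z -> pideal Q z.
Proof.
move=> [Q1 /(_ z) [//|[w [r zw]]]] [k zk0].
have [v uv] : unit_elt (1 + - (z * w)).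
  by apply: unit_elt_1D_nilpotent; exists k; rewrite exprNn exprMn zk0 !mul0r mulr0.
by exfalso; apply: Q1; exists (- (v * r)); rewrite -uv zw; ring.
Qed.

Lemma field_quotient_maximal (Q : T) : field_quotient Q -> maximal_ideal (pideal Q).
Proof.
move=> [Q1 QP]; split; [exact: pideal_is_ideal | by exists 1 |].
move=> J [_ JD JM] QJ; have [JQ|] := classic (forall z, J z -> pideal Q z).
  by right => z; split; [apply: JQ | apply: QJ].
move=> /not_all_ex_not [z /(imply_to_and (J z)) [Jz Qz]]; left.
have [//|[w [r zw]]] := QP z.
have J1 : J 1.
  have -> : 1 = w * z + (- r) * Q by rewrite mulrC zw; ring.
  by apply: JD; [apply: JM | apply: QJ; exists (- r)].
by move=> y; rewrite -[y]mulr1; apply: JM.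
Qed.

Lemma maximal_ideal_ext (M N : T -> Prop) :
  (forall z, M z <-> N z) -> maximal_ideal N -> maximal_ideal M.
Proof.
move=> MN [[N0 ND NM] [z Nz] Nmax]; split.
- split; first exact/MN.
  + by move=> a b /MN Na /MN Nb; apply/MN; apply: ND.
  + by move=> r a /MN Na; apply/MN; apply: NM.
- by exists z; move/MN.
- move=> J idJ MJ; have NJ y : N y -> J y by move/MN; apply: MJ.
  by have [J1|JN] := Nmax J idJ NJ; [left | right => y; rewrite JN MN].
Qed.

Lemma maximal_ideal_proper (M : T -> Prop) : maximal_ideal M -> ~ M 1.
Proof. by move=> [[_ _ MM] [z Mz] _] M1; apply: Mz; rewrite -[z]mulr1; apply: MM. Qed.

Lemma maximal_idealP (M : T -> Prop) (a : T) :
  maximal_ideal M -> M a \/ exists m r, M m /\ m + r * a = 1.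
Proof.
move=> maxM; have [[M0 MD MM] _ Mmax] := maxM.
pose Ma z := exists m r, M m /\ z = m + r * a.
have idMa : is_ideal Ma.
  split; first by exists 0, 0; rewrite mul0r addr0.
  - move=> x y [m [r [Mm ->]]] [m' [r' [Mm' ->]]].
    by exists (m + m'), (r + r'); split; [exact: MD | ring].
  - move=> t x [m [r [Mm ->]]].
    by exists (t * m), (t * r); split; [exact: MM | ring].
have MMa z : M z -> Ma z by exists z, 0; rewrite mul0r addr0.
have [Ma1|MaM] := Mmax Ma idMa MMa.
  by right; have [m [r [Mm e1]]] := Ma1 1; exists m, r.
by left; apply/MaM; exists 0, 1; rewrite add0r mul1r.
Qed.

Lemma maximal_ideal_nilpotent (M : T -> Prop) (a : T) :
  maximal_ideal M -> nilpotent_elt a -> M a.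
Proof.
move=> maxM [k ak0]; have [//|[m [r [Mm mra]]]] := maximal_idealP a maxM.
have [v mv] : unit_elt (1 + - r * a).
  by apply: unit_elt_1D_nilpotent; exists k; rewrite exprMn ak0 mulr0.
have [[_ _ MM] _ _] := maxM; exfalso; apply: (maximal_ideal_proper maxM).
have -> : 1 = v * m by rewrite -mv -mra; ring.
exact: MM.
Qed.

Lemma maximal_ideal_eq_pideal (M : T -> Prop) (Q : T) :
  maximal_ideal M -> field_quotient Q -> M Q -> forall z, M z <-> pideal Q z.
Proof.
move=> maxM fQ MQ; have [idM _ _] := maxM; have [_ _ MM] := idM.
have [_ _ Qmax] := field_quotient_maximal fQ.
have QM z : pideal Q z -> M z by move=> [r ->]; apply: MM.
have [M1|//] := Qmax M idM QM.
by case: (maximal_ideal_proper maxM (M1 1)).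
Qed.

Section TwoMaximalIdeals.
Variables Q1 Q2 : T.
Hypothesis nilQ12 : nilpotent_elt (Q1 * Q2).
Hypotheses (fieldQ1 : field_quotient Q1) (fieldQ2 : field_quotient Q2).
Hypothesis Q1_notin_Q2 : ~ pideal Q2 Q1.

Lemma comaximal_pair : exists a b, a * Q1 + b * Q2 = 1.
Proof.
have [_ /(_ Q1) [//|[w [r Q1w]]]] := fieldQ2.
by exists w, (- r); rewrite mulrC Q1w; ring.
Qed.

Lemma nilpotent_pairP z : nilpotent_elt z <-> pideal (Q1 * Q2) z.
Proof.
split=> [nz|[r ->]]; last first.
  by have [k Qk0] := nilQ12; exists k; rewrite exprMn Qk0 mulr0.
have [c zc] := field_quotient_nilpotent fieldQ1 nz.
have [d zd] := field_quotient_nilpotent fieldQ2 nz.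
have [a [b ab1]] := comaximal_pair.
exists (d * a + c * b); rewrite -[z]mulr1 -ab1 mulrDr {1}zd zc; ring.
Qed.

Lemma nonunit_pairP z : ~ unit_elt z <-> pideal Q1 z \/ pideal Q2 z.
Proof.
split=> [nuz|[]]; last 2 first.
- exact: pideal_nonunit (proj1 fieldQ1).
- exact: pideal_nonunit (proj1 fieldQ2).
have [_ /(_ z) [|[w1 [r1 zw1]]]] := fieldQ1; first by left.
have [_ /(_ z) [|[w2 [r2 zw2]]]] := fieldQ2; first by right.
have [a [b ab1]] := comaximal_pair; have [k Qk0] := nilQ12.
have [v uv] : unit_elt (1 + (r1 * b + r2 * a) * (Q1 * Q2)).
  by apply: unit_elt_1D_nilpotent; exists k; rewrite exprMn Qk0 mulr0.
exfalso; apply: nuz; exists ((w1 * (b * Q2) + w2 * (a * Q1)) * v).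
rewrite -uv mulrA; congr (_ * _).
transitivity ((z * w1) * (b * Q2) + (z * w2) * (a * Q1)); first by ring.
by rewrite zw1 zw2 -[in RHS]ab1; ring.
Qed.

Lemma maximal_pairP (M : T -> Prop) :
  maximal_ideal M <-> (forall z, M z <-> pideal Q1 z) \/ (forall z, M z <-> pideal Q2 z).
Proof.
split=> [maxM|[MQ|MQ]]; last 2 first.
- exact: maximal_ideal_ext MQ (field_quotient_maximal fieldQ1).
- exact: maximal_ideal_ext MQ (field_quotient_maximal fieldQ2).
have [idM _ _] := maxM; have [_ MD MM] := idM.
have [MQ1|[m [r [Mm mrQ1]]]] := maximal_idealP Q1 maxM.
  by left; apply: maximal_ideal_eq_pideal.
right; apply: maximal_ideal_eq_pideal => //.
have -> : Q2 = Q2 * m + r * (Q1 * Q2) by rewrite -[Q2 in LHS]mulr1 -mrQ1; ring.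
by apply: MD; apply: MM => //; apply: maximal_ideal_nilpotent.
Qed.

Lemma nilpotent_product_two_maximal_pideals : two_maximal_pideals Q1 Q2.
Proof.
split=> //; [split=> // | exact: nilpotent_pairP | exact: nonunit_pairP].
  by move=> Q12; apply: Q1_notin_Q2; apply/Q12; exists 1; rewrite mul1r.
exact: maximal_pairP.
Qed.

End TwoMaximalIdeals.
End IdealTheory.

Lemma in_qpolyK (R : nzRingType) (h : {poly R}) (z : {poly %/ h}) : in_qpoly h z = z.
Proof. by apply: val_inj; apply: in_qpoly_small (size_mk_monic z). Qed.

Lemma in_qpoly_eq0 (R : idomainType) (h P : {poly R}) :
  h \is monic -> (1 < size h)%N -> (in_qpoly h P == 0) = (h %| P).
Proof.
move=> h_monic h_size; have mkh : mk_monic h = h by rewrite /mk_monic h_size h_monic.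
by rewrite -val_eqE /= mkh -Pdiv.IdomainMonic.modpE.
Qed.

Section DualNumbers.
Variable F : finFieldType.

Definition Rreduce (r : Rdual F) : F := (r : {poly F})`_0.

Lemma mk_monic_X2 : mk_monic ('X^2 : {poly F}) = 'X^2.
Proof. by rewrite mk_monic_Xn. Qed.

Lemma Rreduce_is_zmod_morphism : zmod_morphism Rreduce.
Proof. by move=> x y; rewrite /Rreduce /= coefB. Qed.

Lemma Rreduce_is_monoid_morphism : monoid_morphism Rreduce.
Proof.
split=> [|x y]; first by rewrite /Rreduce /= coefC.
have rmodp_coef0 (P : {poly F}) : (Pdiv.Ring.rmodp P (mk_monic 'X^2))`_0 = P`_0.
  have := congr1 (fun Q : {poly F} => Q`_0) (Pdiv.RingMonic.rdivp_eq (monicXn F 2) P).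
  by rewrite mk_monic_X2 coefD coefMXn add0r => ->.
by rewrite /Rreduce poly_of_qpolyM rmodp_coef0 coef0M.
Qed.

Lemma Rreduce_Rc (c : F) : Rreduce (Rc c) = c.
Proof. by rewrite /Rreduce /Rc qpolyCE coefC. Qed.

Lemma Rreduce_Ru : Rreduce (Ru F) = 0.
Proof. by rewrite /Rreduce /Ru in_qpoly_small ?coefX // mk_monic_X2 size_polyX size_polyXn. Qed.

Lemma Ru_sqr : Ru F ^+ 2 = 0.
Proof.
rewrite /Ru -rmorphXn /=; apply/val_inj => /=.
by rewrite mk_monic_X2 Pdiv.RingMonic.rmodpp // monicXn.
Qed.

Lemma Rdual_decomp (r : Rdual F) :
  r = Rc ((r : {poly F})`_0) + Rc ((r : {poly F})`_1) * Ru F.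
Proof.
have r_size : (size (r : {poly F}) <= 2)%N.
  by rewrite -ltnS (leq_trans (size_mk_monic r)) // mk_monic_X2 size_polyXn.
have Rc_in (c : F) : Rc c = in_qpoly 'X^2 c%:P.
  apply: val_inj; rewrite /= Pdiv.Ring.rmodp_small // mk_monic_X2 size_polyXn.
  by rewrite (leq_ltn_trans (size_polyC_leq1 c)).
have r_lin : (r : {poly F}) = ((r : {poly F})`_0)%:P + ((r : {poly F})`_1)%:P * 'X.
  apply/polyP => -[|[|i]]; rewrite coefD coefC coefMX coefC /= ?addr0 ?add0r //.
  by rewrite nth_default // (leq_trans r_size).
by rewrite -[LHS]in_qpolyK {1}r_lin rmorphD rmorphM /= -!Rc_in.
Qed.

End DualNumbers.

HB.instance Definition _ (F : finFieldType) :=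
  GRing.isZmodMorphism.Build (Rdual F) F (@Rreduce F) (@Rreduce_is_zmod_morphism F).
HB.instance Definition _ (F : finFieldType) :=
  GRing.isMonoidMorphism.Build (Rdual F) F (@Rreduce F) (@Rreduce_is_monoid_morphism F).
HB.instance Definition _ (F : finFieldType) :=
  GRing.isZmodMorphism.Build F (Rdual F) (@Rc F) (@qpolyC_is_zmod_morphism F 'X^2).
HB.instance Definition _ (F : finFieldType) :=
  GRing.isMonoidMorphism.Build F (Rdual F) (@Rc F) (@qpolyC_is_monoid_morphism F 'X^2).

Section LiftMorphism.
Variables (F : finFieldType) (p s : nat) (alpha beta : F).

Lemma liftF_is_zmod_morphism : zmod_morphism (liftF p s alpha beta).
Proof. by move=> x y; rewrite /liftF !rmorphB. Qed.

Lemma liftF_is_monoid_morphism : monoid_morphism (liftF p s alpha beta).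
Proof. by split=> [|x y]; rewrite /liftF ?rmorph1 ?rmorph1 // !rmorphM. Qed.

End LiftMorphism.

HB.instance Definition _ (F : finFieldType) p s (alpha beta : F) :=
  GRing.isZmodMorphism.Build {poly F} (Rab p s alpha beta) (liftF p s alpha beta)
    (@liftF_is_zmod_morphism F p s alpha beta).
HB.instance Definition _ (F : finFieldType) p s (alpha beta : F) :=
  GRing.isMonoidMorphism.Build {poly F} (Rab p s alpha beta) (liftF p s alpha beta)
    (@liftF_is_monoid_morphism F p s alpha beta).

Section RingRab.
Variables (F : finFieldType) (p s : nat) (alpha beta : F).
Hypothesis p_gt0 : (0 < p)%N.

Local Notation N := (4 * p ^ s)%N.
Local Notation M := (modpoly p s alpha beta).
Local Notation A := (Rab p s alpha beta).
Local Notation lift := (liftF p s alpha beta).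

Definition Rab_u : A := in_qpoly M (Ru F)%:P.

Lemma Rab_u_sqr : Rab_u ^+ 2 = 0.
Proof. by rewrite /Rab_u -rmorphXn /= -rmorphXn /= Ru_sqr rmorph0. Qed.

Lemma mk_monic_modpoly : mk_monic M = M.
Proof.
have N_gt0 : (0 < N)%N by rewrite muln_gt0 expn_gt0 p_gt0.
by rewrite /mk_monic monicXnsubC // size_XnsubC // ltnS N_gt0.
Qed.

Lemma liftF_XnsubC : lift ('X^N - alpha%:P) = lift beta%:P * Rab_u.
Proof.
have M0 : in_qpoly M M = 0.
  apply: val_inj; rewrite /= mk_monic_modpoly Pdiv.RingMonic.rmodpp //.
  by rewrite -mk_monic_modpoly monic_mk_monic.
rewrite /liftF rmorphB /= map_polyXn !map_polyC /=.
have -> : 'X^N - (Rc alpha)%:P = M + (Rc beta)%:P * (Ru F)%:P.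
  by rewrite /modpoly polyCD polyCM; ring.
by rewrite rmorphD rmorphM /= M0 add0r.
Qed.

Lemma Rab_decomp (z : A) : exists P0 P1, z = lift P0 + Rab_u * lift P1.
Proof.
pose P0 := map_poly (@Rreduce F) z.
pose P1 := map_poly (fun r : Rdual F => (r : {poly F})`_1) z.
exists P0, P1; rewrite -[LHS]in_qpolyK.
have -> : (z : {poly Rdual F}) = map_poly (@Rc F) P0 + (Ru F)%:P * map_poly (@Rc F) P1.
  apply/polyP => i; rewrite coefD coefCM !coef_map /= coef_map_id0 ?coef0 //.
  by rewrite [LHS]Rdual_decomp mulrC.
by rewrite rmorphD rmorphM.
Qed.

Lemma nilpotent_liftF (q : {poly F}) k :
  q ^+ k = 'X^N - alpha%:P -> nilpotent_elt (lift q).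
Proof.
move=> qk; exists (k * 2)%N.
by rewrite exprM -rmorphXn /= qk liftF_XnsubC exprMn Rab_u_sqr mulr0.
Qed.

Section Projection.
Variable q : {poly F}.
Hypotheses (q_monic : q \is monic) (q_size : (1 < size q)%N).
Hypothesis q_dvd : q %| 'X^N - alpha%:P.

(* Reduction mod u followed by reduction mod q; it respects multiplication in
   R_{alpha,beta} because q divides x^N - alpha, the reduction of the modulus. *)
Definition Rab_proj (z : A) : {poly %/ q} := in_qpoly q (map_poly (@Rreduce F) z).

Lemma Rab_proj_in_qpoly (P : {poly Rdual F}) :
  Rab_proj (in_qpoly M P) = in_qpoly q (map_poly (@Rreduce F) P).
Proof.
have map_modpoly : map_poly (@Rreduce F) M = 'X^N - alpha%:P.
  rewrite /modpoly rmorphB /= map_polyXn map_polyC /= rmorphD rmorphM /=.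
  by rewrite Rreduce_Rc Rreduce_Rc Rreduce_Ru mulr0 addr0.
have q_XnsubC : in_qpoly q ('X^N - alpha%:P) = 0 by apply/eqP; rewrite in_qpoly_eq0.
rewrite /Rab_proj /= mk_monic_modpoly.
have M_monic : M \is monic by rewrite -mk_monic_modpoly monic_mk_monic.
rewrite {2}(Pdiv.RingMonic.rdivp_eq M_monic P) !rmorphD !rmorphM /=.
by rewrite map_modpoly q_XnsubC mulr0 add0r.
Qed.

Lemma Rab_projM (a b : A) : Rab_proj (a * b) = Rab_proj a * Rab_proj b.
Proof. by rewrite [a * b]/(in_qpoly M (_ * _)) Rab_proj_in_qpoly !rmorphM. Qed.

Lemma Rab_proj_liftF (P : {poly F}) : Rab_proj (lift P) = in_qpoly q P.
Proof.
rewrite /liftF Rab_proj_in_qpoly -map_poly_comp map_poly_id // => c _ /=.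
exact: Rreduce_Rc.
Qed.

Lemma liftF_pideal_dvdp (P : {poly F}) : pideal (lift q) (lift P) -> q %| P.
Proof.
move=> [r /(congr1 Rab_proj)]; rewrite Rab_projM !Rab_proj_liftF.
have /eqP -> : in_qpoly q q == 0 by rewrite in_qpoly_eq0.
by rewrite mulr0 => /eqP; rewrite in_qpoly_eq0.
Qed.

End Projection.

Lemma field_quotient_liftF (q : {poly F}) :
  beta != 0 -> irreducible_poly q -> q \is monic -> q %| 'X^N - alpha%:P ->
  field_quotient (lift q).
Proof.
move=> beta_neq0 q_irr q_monic q_dvd; have [q_size _] := q_irr.
split=> [|z].
  rewrite -(rmorph1 lift) => /(liftF_pideal_dvdp q_monic q_size q_dvd).
  by rewrite dvdp1 gtn_eqF.
have [w u_w] : pideal (lift q) Rab_u.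
  have /dvdpP [t qt] := q_dvd; exists (lift (beta^-1%:P * t)).
  have beta_inv : lift (beta^-1)%:P * lift beta%:P = 1.
    by rewrite -rmorphM -polyCM mulVf // polyC1 rmorph1.
  by rewrite -[Rab_u]mul1r -beta_inv -mulrA -liftF_XnsubC qt !rmorphM mulrA.
have [P0 [P1 ->]] := Rab_decomp z.
have [/dvdpP [t ->]|] := boolP (q %| P0).
  by left; exists (lift t + w * lift P1); rewrite u_w rmorphM; ring.
rewrite -irreducible_poly_coprime // => /Bezout_eq1_coprimepP [[u1 u2] /= bezout].
right; exists (lift u2), (- lift u1 + w * lift P1 * lift u2).
have bezoutA : lift P0 * lift u2 = 1 - lift u1 * lift q.
  by rewrite -(rmorph1 lift) -bezout rmorphD !rmorphM; ring.
by rewrite mulrDl bezoutA u_w; ring.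
Qed.

Lemma liftF_two_maximal_pideals (q1 q2 : {poly F}) (k : nat) :
  beta != 0 -> (0 < k)%N -> (q1 * q2) ^+ k = 'X^N - alpha%:P ->
  q1 \is monic -> q2 \is monic -> irreducible_poly q1 -> irreducible_poly q2 ->
  ~~ (q2 %| q1) -> two_maximal_pideals (lift q1) (lift q2).
Proof.
move=> beta_neq0 k_gt0 q12k q1_monic q2_monic q1_irr q2_irr q2Nq1.
have dvd_q12 q : q %| q1 * q2 -> q %| 'X^N - alpha%:P by rewrite -q12k => /dvdp_exp->.
have [q2_size _] := q2_irr.
apply: nilpotent_product_two_maximal_pideals.
- by rewrite -rmorphM; apply: nilpotent_liftF q12k.
- by apply: field_quotient_liftF; rewrite ?dvd_q12 ?dvdp_mulr.
- by apply: field_quotient_liftF; rewrite ?dvd_q12 ?dvdp_mull.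
- move/(liftF_pideal_dvdp q2_monic q2_size (dvd_q12 _ (dvdp_mull _ (dvdpp _)))).
  exact/negP.
Qed.

End RingRab.

Lemma XnsubC_expn_pchar (R : comNzRingType) (p n k : nat) (c : R) :
  p \in [pchar R] -> ('X^n - c%:P) ^+ (p ^ k) = 'X^(n * p ^ k) - (c ^+ (p ^ k))%:P.
Proof.
move=> pcharRp; have pk_pchar : [pchar {poly R}].-nat (p ^ k)%N.
  rewrite (eq_pnat _ (pchar_poly R)) (eq_pnat _ (pcharf_eq pcharRp)).
  by rewrite pnatX pnat_id // (pcharf_prime pcharRp).
by rewrite exprDn_pchar // exprNn_pchar // -exprM rmorphXn.
Qed.

Lemma natr2_neq0_pchar (F : fieldType) (p : nat) :
  p \in [pchar F] -> odd p -> 2%:R != 0 :> F.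
Proof.
move=> pcharFp p_odd; apply/negP => /eqP two0.
have : 2%N \in [pchar F] by rewrite inE /= two0 eqxx.
by rewrite (pcharf_eq pcharFp) inE => /eqP p2; rewrite -p2 in p_odd.
Qed.

(* Since #|F| = 4k + 3, a square root x of -1 would satisfy x = x ^+ #|F| = x ^+ 3 = -x. *)
Lemma sqrf_neqN1 (F : finFieldType) (x : F) :
  (#|F| %% 4 = 3)%N -> 2%:R != 0 :> F -> x ^+ 2 != -1.
Proof.
move=> card3 two_neq0; apply/eqP => x2.
have cardE : #|F| = (4 * (#|F| %/ 4)).+3 by rewrite {1}(divn_eq #|F| 4) card3; lia.
have x4 : x ^+ 4 = 1 by rewrite (exprM x 2 2) x2; ring.
have := expf_card x; rewrite cardE !exprS exprM x4 expr1n mulr1 mulrA -expr2 x2 mulN1r.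
move=> xN; have : x *+ 2 == 0 by rewrite mulr2n -{1}xN addNr.
rewrite -mulr_natr mulf_eq0 (negPf two_neq0) orbF => /eqP x0.
by move: x2; rewrite x0 expr0n /= => /eqP; rewrite eq_sym oppr_eq0 oner_eq0.
Qed.

Section QuadraticFactors.
Variable F : fieldType.
Hypothesis two_neq0 : 2%:R != 0 :> F.

Lemma natr4_neq0 : 4%:R != 0 :> F.
Proof. by rewrite -[4%N]/(2 * 2)%N natrM mulf_neq0. Qed.

Definition quadX (g : F) : {poly F} := 'X^2 + g%:P * 'X + (g ^+ 2 / 2%:R)%:P.

Lemma size_quadX_linear_lt (g : F) : (size (g%:P * 'X + (g ^+ 2 / 2%:R)%:P)%R < size ('X^2 : {poly F}))%N.
Proof.
rewrite size_MXaddC size_polyXn; case: ifP => // _.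
by rewrite !ltnS (leq_trans (size_polyC_leq1 g)).
Qed.

Lemma size_quadX (g : F) : size (quadX g) = 3%N.
Proof. by rewrite /quadX -addrA size_polyDl ?size_quadX_linear_lt // size_polyXn. Qed.

Lemma quadX_monic (g : F) : quadX g \is monic.
Proof. by rewrite monicE /quadX -addrA lead_coefDl ?size_quadX_linear_lt // lead_coefXn. Qed.

(* A root x of quadX g would give the square root (2 x + g) / g of -1. *)
Lemma quadX_irreducible (g : F) :
  g != 0 -> (forall x : F, x ^+ 2 != -1) -> irreducible_poly (quadX g).
Proof.
move=> g_neq0 noSqrtN1; apply: cubic_irreducible => [|x]; first by rewrite size_quadX.
apply/negP => /rootP; rewrite /quadX !hornerE => qx0.
have : ((2%:R * x + g) / g) ^+ 2 = 4%:R * (x ^+ 2 + g * x + g ^+ 2 / 2%:R) / g ^+ 2 - 1.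
  by field; rewrite two_neq0 g_neq0.
by rewrite qx0 mulr0 mul0r sub0r; apply/eqP.
Qed.

Lemma quadX_mulN (g a : F) :
  g ^+ 4 + 4%:R * a = 0 -> quadX g * quadX (- g) = 'X^4 - a%:P.
Proof.
move=> g4a; set c := g ^+ 2 / 2%:R.
have c2 : c *+ 2 = g ^+ 2 by rewrite /c; field.
have c_sq : c ^+ 2 = - a.
  have g4 : g ^+ 4 = - (4%:R * a) by apply/eqP; rewrite -addr_eq0 g4a.
  by rewrite /c expr_div_n -exprM g4; field; rewrite natr4_neq0.
rewrite /quadX sqrrN -/c polyCN -[- a%:P]polyCN -c_sq polyC_exp.
transitivity ('X^4 + c%:P ^+ 2 + (c%:P *+ 2 - g%:P ^+ 2) * 'X^2 : {poly F}); first by ring.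
by rewrite -polyCMn c2 polyC_exp subrr mul0r addr0.
Qed.

Lemma quadX_Ndvdp (g : F) : g != 0 -> ~~ (quadX (- g) %| quadX g).
Proof.
move=> g_neq0; apply/negP => dvd_qq.
have g2_neq0 : g *+ 2 != 0 by rewrite -mulr_natr mulf_neq0.
have diff_neq0 : (g *+ 2)%:P * 'X != 0 by rewrite mulf_neq0 ?polyX_eq0 ?polyC_eq0.
have dvd_diff : quadX (- g) %| (g *+ 2)%:P * 'X.
  have -> : (g *+ 2)%:P * 'X = quadX g - quadX (- g).
    by rewrite /quadX sqrrN polyCN polyCMn; ring.
  by rewrite dvdp_sub ?dvdpp.
have := dvdp_leq diff_neq0 dvd_diff.
by rewrite size_quadX size_mulX ?polyC_eq0 // size_polyC g2_neq0.
Qed.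

End QuadraticFactors.

Theorem corollary3p3 (F : finFieldType) (p m s : nat)
  (hp : prime p) (hpodd : odd p) (hm : (0 < m)%N) (hs : (0 < s)%N)
  (hcard : #|F| = (p ^ m)%N) (h3 : (p ^ m %% 4)%N = 3%N)
  (alpha alpha0 gamma beta : F)
  (halpha : alpha != 0) (hnsq : ~ (exists y : F, y ^+ 2 = alpha))
  (halpha0 : alpha0 ^+ (p ^ s) = alpha)
  (hgamma : gamma ^+ 4 + 4%:R * alpha0 = 0)
  (hbeta : beta != 0) :
  let q1 : {poly F} := 'X^2 + gamma%:P * 'X + (gamma ^+ 2 / 2%:R)%:P in
  let q2 : {poly F} := 'X^2 - gamma%:P * 'X + (gamma ^+ 2 / 2%:R)%:P in
  let q3 : {poly F} := 'X^4 - alpha0%:P in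
  let I1 := pideal (liftF p s alpha beta q1) in
  let I2 := pideal (liftF p s alpha beta q2) in
  (* (a) exactly two maximal ideals, namely I1 and I2 *)
  [/\ (~ (forall z, I1 z <-> I2 z)) /\
      (forall M : Rab p s alpha beta -> Prop,
         maximal_ideal M <-> ((forall z, M z <-> I1 z) \/ (forall z, M z <-> I2 z))),
  (* (b) nilradical = <x^4 - alpha0> *)
      (forall z : Rab p s alpha beta,
         nilpotent_elt z <-> pideal (liftF p s alpha beta q3) z)
  & (* (c) non-units = I1 U I2 *)
      (forall z : Rab p s alpha beta, ~ unit_elt z <-> (I1 z \/ I2 z))].
Proof.
move=> q1 q2 q3 I1 I2.
have p_gt0 := prime_gt0 hp.
have pcharFp : p \in [pchar F] := card_finPcharP hcard hp.
have two_neq0 := natr2_neq0_pchar pcharFp hpodd.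
have noSqrtN1 (x : F) : x ^+ 2 != -1 by apply: sqrf_neqN1; rewrite ?hcard.
have gamma_neq0 : gamma != 0.
  apply: contraNneq halpha => gamma0; move/eqP: hgamma.
  rewrite gamma0 expr0n add0r mulf_eq0 (negPf (natr4_neq0 two_neq0)) => /eqP alpha00.
  by rewrite -halpha0 alpha00 expr0n expn_eq0 gtn_eqF.
have q2E : q2 = quadX (- gamma) by rewrite /q2 /quadX sqrrN polyCN mulNr.
have q12 : q1 * q2 = q3 by rewrite q2E (quadX_mulN two_neq0 hgamma).
rewrite -q12 rmorphM; refine (liftF_two_maximal_pideals (k := (p ^ s)%N) p_gt0 hbeta _ _ _ _ _ _ _).
- by rewrite expn_gt0 p_gt0.
- by rewrite q12 XnsubC_expn_pchar // halpha0.
- exact: quadX_monic.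
- by rewrite q2E quadX_monic.
- exact: quadX_irreducible.
- by rewrite q2E; apply: quadX_irreducible; rewrite ?oppr_eq0.
- by rewrite q2E quadX_Ndvdp.
Qed.
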